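(* Let $(M,g)$ be a $2$-dimensional Riemannian manifold with Levi-Civita connection $\nabla$, and let $h=h_{ij}dx^i\otimes dx^j$ be a smooth symmetric Codazzi tensor, i.e. $h_{ij}=h_{ji}$ and $\nabla_ih_{jk}=\nabla_jh_{ik}$ for all $i,j,k$. Let $H=g^{ij}h_{ij}$ and $\mathring{h}_{ij}:=h_{ij}-\frac{H}{2}g_{ij}$. Then \[ 2|\mathring{h}|^2\bigl(|\nabla h|^2-|\nabla H|^2\bigr)=\bigl|\nabla|\mathring{h}|^2\bigr|^2-2\,\mathring{h}_{ij}\,\nabla^i|\mathring{h}|^2\,\nabla^jH . \]
   Context: All norms and contractions are taken with respect to $g$, e.g. $|\mathring h|^2=g^{ik}g^{jl}\mathring h_{ij}\mathring h_{kl}$, $|\nabla h|^2=g^{ia}g^{jb}g^{kc}\nabla_ih_{jk}\nabla_ah_{bc}$, and $\nabla^i=g^{ij}\nabla_j$. *)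

(* Local coordinate formulation of a 2-dimensional
   Riemannian manifold: an open chart U of R^2 (row vectors 'rV[R]_2) with a
   smooth metric g_ij and smooth symmetric tensor h_ij. *)
From HB Require Import structures.
From mathcomp Require Import all_boot all_order all_algebra.
From mathcomp Require Import all_classical all_reals all_analysis.
Set Implicit Arguments. Unset Strict Implicit. Unset Printing Implicit Defensive.
Import Order.TTheory GRing.Theory Num.Theory.
Import numFieldNormedType.Exports.
Local Open Scope classical_set_scope.
Local Open Scope ring_scope.

Section Defs.
Variable R : realType.
Notation P := 'rV[R]_2.
Notation fn := (P -> R).

Definition ecoord (i : 'I_2) : P := delta_mx 0 i.

Definition pd (i : 'I_2) (f : fn) : fn := fun x => 'D_(ecoord i) f x.

Definition pds (s : seq 'I_2) (f : fn) : fn := foldr pd f s.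

Definition smooth_on (U : set P) (f : fn) : Prop :=
  forall (s : seq 'I_2) (x : P), U x -> differentiable (pds s f) x.

Definition tensor2 := 'I_2 -> 'I_2 -> fn.

Definition matx (g : tensor2) (x : P) : 'M[R]_2 := \matrix_(i, j) g i j x.

Definition riemannian_metric_on (U : set P) (g : tensor2) : Prop :=
  (forall i j, smooth_on U (g i j)) /\
  (forall i j x, U x -> g i j x = g j i x) /\
  (forall x (v : 'rV[R]_2), U x -> v != 0 -> 0 < (v *m matx g x *m v^T) 0 0).

Definition ginv (g : tensor2) : tensor2 := fun i j x => invmx (matx g x) i j.

Definition christoffel (g : tensor2) (k i j : 'I_2) : fn := fun x =>
  2^-1 * \sum_(l < 2) ginv g k l x *
     (pd i (g j l) x + pd j (g i l) x - pd l (g i j) x).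

Definition nabla2 (g h : tensor2) (i j k : 'I_2) : fn := fun x =>
  pd i (h j k) x
  - \sum_(l < 2) christoffel g l i j x * h l k x
  - \sum_(l < 2) christoffel g l i k x * h j l x.

Definition meanH (g h : tensor2) : fn := fun x =>
  \sum_(i < 2) \sum_(j < 2) ginv g i j x * h i j x.

Definition traceless (g h : tensor2) : tensor2 := fun i j x =>
  h i j x - meanH g h x / 2 * g i j x.

Definition norm2sq (g T : tensor2) : fn := fun x =>
  \sum_(i < 2) \sum_(j < 2) \sum_(k < 2) \sum_(l < 2)
    ginv g i k x * ginv g j l x * T i j x * T k l x.

Definition norm3sq (g : tensor2) (T : 'I_2 -> 'I_2 -> 'I_2 -> fn) : fn := fun x =>
  \sum_(i < 2) \sum_(j < 2) \sum_(k < 2) \sum_(a < 2) \sum_(b < 2) \sum_(c < 2)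
    ginv g i a x * ginv g j b x * ginv g k c x * T i j k x * T a b c x.

Definition gradinner (g : tensor2) (f1 f2 : fn) : fn := fun x =>
  \sum_(i < 2) \sum_(j < 2) ginv g i j x * pd i f1 x * pd j f2 x.

Definition contract_grad (g T : tensor2) (f1 f2 : fn) : fn := fun x =>
  \sum_(i < 2) \sum_(j < 2) \sum_(a < 2) \sum_(b < 2)
    T i j x * ginv g i a x * pd a f1 x * ginv g j b x * pd b f2 x.

End Defs.

From HB Require Import structures.
From mathcomp Require Import all_boot all_order all_algebra.
From mathcomp Require Import all_classical all_reals all_analysis.
From mathcomp Require Import ring.
Set Implicit Arguments. Unset Strict Implicit. Unset Printing Implicit Defensive.
Import Order.TTheory GRing.Theory Num.Theory.
Import numFieldNormedType.Exports.
Local Open Scope classical_set_scope.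
Local Open Scope ring_scope.

(* At a point, metric compatibility of the Levi-Civita connection gives
   d_a H = g^ij nabla_a h_ij and d_a |h°|^2 = 2 <h°, nabla_a h>, the latter because
   h° is g-orthogonal to g.  By the Codazzi equation and the symmetry of h, nabla h is
   a totally symmetric 3-tensor, and the claimed identity becomes a rational identity
   in the entries of g, h and nabla h (with g^-1 given by Cramer's rule), which holds
   in dimension two. *)

Section TwoByTwo.

Lemma sum_ord2 (V : nmodType) (F : 'I_2 -> V) : \sum_(i < 2) F i = F ord0 + F ord_max.
Proof. by rewrite big_ord_recl big_ord1; congr (_ + F _); apply/val_inj. Qed.

Lemma ord2P (i : 'I_2) : i = ord0 \/ i = ord_max.
Proof. by case: i => [[|[|n]] lti]; [left | right | by []]; apply/val_inj. Qed.

Variable F : fieldType.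

Lemma mx2_left_inverseE (a b c d p q r s : F) :
  p * a + q * c = 1 -> p * b + q * d = 0 -> r * a + s * c = 0 -> r * b + s * d = 1 ->
  [/\ a * d - b * c != 0, p = d / (a * d - b * c), q = - b / (a * d - b * c),
      r = - c / (a * d - b * c) & s = a / (a * d - b * c)].
Proof.
move=> e1 e2 e3 e4.
have detK : (p * s - q * r) * (a * d - b * c) = 1.
  transitivity ((p * a + q * c) * (r * b + s * d) - (p * b + q * d) * (r * a + s * c)).
    by ring.
  by rewrite e1 e2 e3 e4; ring.
have D0 : a * d - b * c != 0.
  by apply: contra_eq_neq detK => ->; rewrite mulr0 eq_sym oner_eq0.
have solve (u w : F) : u * (a * d - b * c) = w -> u = w / (a * d - b * c).
  by move=> <-; rewrite mulfK.
split=> //; apply: solve.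
- by transitivity (d * (p * a + q * c) - c * (p * b + q * d)); [ring | rewrite e1 e2; ring].
- by transitivity (a * (p * b + q * d) - b * (p * a + q * c)); [ring | rewrite e1 e2; ring].
- by transitivity (d * (r * a + s * c) - c * (r * b + s * d)); [ring | rewrite e3 e4; ring].
- by transitivity (a * (r * b + s * d) - b * (r * a + s * c)); [ring | rewrite e3 e4; ring].
Qed.

End TwoByTwo.

Section CovariantContraction.
Variables (F : comRingType) (Gi Gamma : 'I_2 -> 'I_2 -> F).
Hypothesis Gi_sym : forall i j, Gi i j = Gi j i.

(* Read [Gamma l i] as the Christoffel symbol of a fixed direction k with upper index l:
   then [cov_d T dT] is nabla_k T in coordinates when [dT] is d_k T, and [cov_dinv] is
   the derivative d_k g^ij imposed by the metric compatibility of the connection. *)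
Definition cov_dinv (i j : 'I_2) : F :=
  - \sum_(a < 2) Gamma i a * Gi a j - \sum_(a < 2) Gamma j a * Gi i a.

Definition cov_d (T dT : 'I_2 -> 'I_2 -> F) (i j : 'I_2) : F :=
  dT i j - \sum_(l < 2) Gamma l i * T l j - \sum_(l < 2) Gamma l j * T i l.

Lemma trace_leibniz (T dT : 'I_2 -> 'I_2 -> F) :
  \sum_(i < 2) \sum_(j < 2) (Gi i j * dT i j + T i j * cov_dinv i j)
  = \sum_(i < 2) \sum_(j < 2) Gi i j * cov_d T dT i j.
Proof. by rewrite /cov_d /cov_dinv !sum_ord2; ring. Qed.

Lemma norm_leibniz (T dT : 'I_2 -> 'I_2 -> F) :
  \sum_(i < 2) \sum_(j < 2) \sum_(a < 2) \sum_(b < 2)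
    (Gi i a * Gi j b * T i j * dT a b
     + T a b * (Gi i a * Gi j b * dT i j
                + T i j * (Gi i a * cov_dinv j b + Gi j b * cov_dinv i a)))
  = 2 * \sum_(i < 2) \sum_(j < 2) \sum_(a < 2) \sum_(b < 2)
          Gi i a * Gi j b * T i j * cov_d T dT a b.
Proof. by rewrite /cov_d /cov_dinv !sum_ord2 (Gi_sym ord_max ord0); ring. Qed.

End CovariantContraction.

Section TracelessIdentity.
Variables (F : numFieldType) (G Gi h : 'I_2 -> 'I_2 -> F) (T : 'I_2 -> 'I_2 -> 'I_2 -> F).
Variables (dH dN : 'I_2 -> F).
Hypotheses (G_sym : forall i j, G i j = G j i) (h_sym : forall i j, h i j = h j i).
Hypothesis Gi_G : forall i j, \sum_(l < 2) Gi i l * G l j = (i == j)%:R.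
Hypotheses (T_sym12 : forall i j k, T i j k = T j i k) (T_sym23 : forall i j k, T i j k = T i k j).

Let H := \sum_(i < 2) \sum_(j < 2) Gi i j * h i j.
Let ho i j := h i j - H / 2 * G i j.

Hypothesis dH_trace : forall a, dH a = \sum_(i < 2) \sum_(j < 2) Gi i j * T a i j.
Hypothesis dN_inner : forall a,
  dN a = 2 * \sum_(i < 2) \sum_(j < 2) \sum_(c < 2) \sum_(b < 2) Gi i c * Gi j b * ho i j * T a c b.

Lemma traceless_symmetric_identity :
  2 * (\sum_(i < 2) \sum_(j < 2) \sum_(a < 2) \sum_(b < 2) Gi i a * Gi j b * ho i j * ho a b)
    * ((\sum_(i < 2) \sum_(j < 2) \sum_(k < 2) \sum_(a < 2) \sum_(b < 2) \sum_(c < 2)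
          Gi i a * Gi j b * Gi k c * T i j k * T a b c)
       - \sum_(i < 2) \sum_(j < 2) Gi i j * dH i * dH j)
  = \sum_(i < 2) \sum_(j < 2) Gi i j * dN i * dN j
    - 2 * \sum_(i < 2) \sum_(j < 2) \sum_(a < 2) \sum_(b < 2)
            ho i j * Gi i a * dN a * Gi j b * dH b.
Proof.
have T1 : T ord0 ord0 ord_max = T ord_max ord0 ord0 by rewrite T_sym23 T_sym12.
have T2 : T ord0 ord_max ord0 = T ord_max ord0 ord0 by rewrite T_sym12.
have T3 : T ord_max ord_max ord0 = T ord0 ord_max ord_max by rewrite T_sym12 T_sym23.
have T4 : T ord_max ord0 ord_max = T ord0 ord_max ord_max by rewrite T_sym12.
move: (Gi_G ord0 ord0) (Gi_G ord0 ord_max) (Gi_G ord_max ord0) (Gi_G ord_max ord_max).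
rewrite !sum_ord2 /= => e00 e01 e10 e11.
have [D0 E00 E01 E10 E11] := mx2_left_inverseE e00 e01 e10 e11.
rewrite !dH_trace !dN_inner /ho /H !sum_ord2 T1 T2 T3 T4 E00 E01 E10 E11.
rewrite (G_sym ord_max ord0) (h_sym ord_max ord0).
rewrite (G_sym ord_max ord0) in D0.
by field.
Qed.

End TracelessIdentity.

Section DirectionalDerivative.
Variables (R : numFieldType) (V : normedModType R) (x v : V).

Lemma is_derive_mul (f g : V -> R) (df dg : R) :
  is_derive x v f df -> is_derive x v g dg ->
  is_derive x v (fun y => f y * g y) (f x * dg + g x * df).
Proof. exact: is_deriveM. Qed.

Lemma is_derive_sub (f g : V -> R) (df dg : R) :
  is_derive x v f df -> is_derive x v g dg ->
  is_derive x v (fun y => f y - g y) (df - dg).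
Proof. exact: is_deriveB. Qed.

Lemma is_derive_inv (f : V -> R) (df : R) : f x != 0 -> is_derive x v f df ->
  is_derive x v (fun y => (f y)^-1) (- (f x) ^- 2 * df).
Proof.
move=> fx0 [fv <-]; split; first exact: derivableV.
by rewrite deriveV.
Qed.

Lemma is_derive_sumf n (F : 'I_n -> V -> R) (dF : 'I_n -> R) :
  (forall i, is_derive x v (F i) (dF i)) ->
  is_derive x v (fun y => \sum_(i < n) F i y) (\sum_(i < n) dF i).
Proof.
move=> dFi; have := is_derive_sum dFi.
by congr (is_derive _ _ _ _); apply/funext => y; rewrite fct_sumE.
Qed.

End DirectionalDerivative.

Section Metric.
Variables (R : realType) (U : set 'rV[R]_2) (g : tensor2 R).
Hypothesis g_metric : riemannian_metric_on U g.

Definition metric_det (y : 'rV[R]_2) : R :=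
  g ord0 ord0 y * g ord_max ord_max y - g ord0 ord_max y * g ord_max ord0 y.

Definition metric_adj (i j : 'I_2) (y : 'rV[R]_2) : R :=
  if i == ord0 then (if j == ord0 then g ord_max ord_max y else - g ord0 ord_max y)
  else (if j == ord0 then - g ord_max ord0 y else g ord0 ord0 y).

Lemma metric_sym i j y : U y -> g i j y = g j i y.
Proof. by case: g_metric => _ [gsym _]; exact: gsym. Qed.

Lemma metric_unitmx y : U y -> matx g y \in unitmx.
Proof.
case: g_metric => _ [_ gpos] Uy.
rewrite unitmxE unitfE; apply/negP => /det0P [v v0 vg0].
by have := gpos y v Uy v0; rewrite vg0 mul0mx mxE ltxx.
Qed.

Lemma ginv_metric i j y : U y -> \sum_(l < 2) ginv g i l y * g l j y = (i == j)%:R.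
Proof.
move=> Uy; have := congr1 (fun A : 'M[R]_2 => A i j) (mulVmx (metric_unitmx Uy)).
by rewrite !mxE => <-; apply: eq_bigr => l _; rewrite mxE.
Qed.

Lemma metric_ginv i j y : U y -> \sum_(l < 2) g i l y * ginv g l j y = (i == j)%:R.
Proof.
move=> Uy; have := congr1 (fun A : 'M[R]_2 => A i j) (mulmxV (metric_unitmx Uy)).
by rewrite !mxE => <-; apply: eq_bigr => l _; rewrite mxE.
Qed.

Lemma ginv_sym i j y : U y -> ginv g i j y = ginv g j i y.
Proof.
move=> Uy; have gT : (matx g y)^T = matx g y.
  by apply/matrixP => a b; rewrite !mxE metric_sym.
by rewrite /ginv -[in RHS]gT -trmx_inv mxE.
Qed.

Lemma ginv_cramer y : U y ->
  [/\ metric_det y != 0,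
      ginv g ord0 ord0 y = g ord_max ord_max y / metric_det y,
      ginv g ord0 ord_max y = - g ord0 ord_max y / metric_det y,
      ginv g ord_max ord0 y = - g ord_max ord0 y / metric_det y &
      ginv g ord_max ord_max y = g ord0 ord0 y / metric_det y].
Proof.
move=> Uy; have e a b := ginv_metric a b Uy.
move: (e ord0 ord0) (e ord0 ord_max) (e ord_max ord0) (e ord_max ord_max).
rewrite !sum_ord2 /=; exact: mx2_left_inverseE.
Qed.

Lemma metric_det_neq0 y : U y -> metric_det y != 0.
Proof. by case/ginv_cramer. Qed.

Lemma ginvE i j y : U y -> ginv g i j y = metric_adj i j y / metric_det y.
Proof.
case/ginv_cramer=> _ E00 E01 E10 E11; rewrite /metric_adj.
by case: (ord2P i) => ->; case: (ord2P j) => ->.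
Qed.

End Metric.

Section ChristoffelSymbols.
Variables (R : realType) (g : tensor2 R).

Definition christoffel1 (i j l : 'I_2) (y : 'rV[R]_2) : R :=
  2^-1 * (pd i (g j l) y + pd j (g i l) y - pd l (g i j) y).

Lemma christoffelE k i j y :
  christoffel g k i j y = \sum_(l < 2) ginv g k l y * christoffel1 i j l y.
Proof. by rewrite /christoffel mulr_sumr; apply: eq_bigr => l _; rewrite /christoffel1; ring. Qed.

End ChristoffelSymbols.

Section Smooth.
Variables (R : realType) (U : set 'rV[R]_2) (x : 'rV[R]_2).
Hypotheses (U_open : open U) (Ux : U x).

Lemma near_domain : \forall y \near x, U y.
Proof. exact: open_nbhs_nbhs. Qed.

Lemma is_derive_pd (f : 'rV[R]_2 -> R) k d : is_derive x (ecoord R k) f d -> pd k f x = d.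
Proof. by case. Qed.

Lemma smooth_is_derive (f : 'rV[R]_2 -> R) k :
  smooth_on U f -> is_derive x (ecoord R k) f (pd k f x).
Proof. by move=> f_smooth; apply/derivableP/diff_derivable; exact: (f_smooth [::]). Qed.

Lemma pd_eq_on (f1 f2 : 'rV[R]_2 -> R) k :
  (forall y, U y -> f1 y = f2 y) -> pd k f1 x = pd k f2 x.
Proof.
move=> f12; apply: near_eq_derive.
by near=> y; apply: f12; near: y; exact: near_domain.
Unshelve. all: by end_near.
Qed.

End Smooth.

Section MetricDerivative.
Variables (R : realType) (U : set 'rV[R]_2) (g : tensor2 R) (x : 'rV[R]_2).
Hypotheses (U_open : open U) (g_metric : riemannian_metric_on U g) (Ux : U x).
Variable k : 'I_2.

Lemma is_derive_metric i j : is_derive x (ecoord R k) (g i j) (pd k (g i j) x).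
Proof. by apply: (smooth_is_derive Ux); case: g_metric => smooth_g _; exact: smooth_g. Qed.

Lemma pd_metric_sym i j : pd k (g i j) x = pd k (g j i) x.
Proof. by apply: (pd_eq_on U_open Ux) => y; apply: metric_sym. Qed.

Lemma derivable_ginv i j : derivable (ginv g i j) x (ecoord R k).
Proof.
have dg a b := is_derive_metric a b.
apply: (@near_eq_derivable _ _ _ (fun y => metric_adj g i j y * (metric_det g y)^-1)).
  by near=> y; rewrite (ginvE g_metric i j) //; near: y; exact: near_domain.
have [dadj is_derive_adj] : exists d, is_derive x (ecoord R k) (metric_adj g i j) d.
  rewrite /metric_adj; case: (ord2P i) => ->; case: (ord2P j) => -> /=;
    by eexists; first [exact: dg | exact: is_deriveN (dg _ _)].
have [ddet is_derive_det] : exists d, is_derive x (ecoord R k) (metric_det g) d.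
  by eexists; apply: is_derive_sub; apply: is_derive_mul; exact: dg.
by have [] := is_derive_mul is_derive_adj (is_derive_inv (metric_det_neq0 g_metric Ux) is_derive_det).
Unshelve. all: by end_near.
Qed.

Lemma pd_ginv i j : pd k (ginv g i j) x =
  - \sum_(a < 2) \sum_(b < 2) ginv g i a x * pd k (g a b) x * ginv g b j x.
Proof.
pose dginv l := pd k (ginv g i l) x.
have product_rule m : \sum_(l < 2) dginv l * g l m x
                      = - \sum_(l < 2) ginv g i l x * pd k (g l m) x.
  have [_] : is_derive x (ecoord R k) (fun y => \sum_(l < 2) ginv g i l y * g l m y)
      (\sum_(l < 2) (ginv g i l x * pd k (g l m) x + g l m x * dginv l)).
    apply: is_derive_sumf => l; apply: is_derive_mul; last exact: is_derive_metric.
    exact/derivableP/derivable_ginv.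
  rewrite (@near_eq_derive _ _ _ _ (cst (i == m)%:R : _ -> R)) ?derive_cst.
    by rewrite !sum_ord2 => sum0; rewrite -[RHS]add0r sum0; ring.
  by near=> y; rewrite (ginv_metric g_metric) //; near: y; exact: near_domain.
transitivity (\sum_(l < 2) dginv l * (l == j)%:R).
  by rewrite sum_ord2 /dginv; case: (ord2P j) => -> /=; rewrite ?eqxx /=; ring.
under eq_bigr => l _ do rewrite -(metric_ginv g_metric l j Ux).
transitivity (\sum_(b < 2) (\sum_(l < 2) dginv l * g l b x) * ginv g b j x).
  by rewrite !sum_ord2; ring.
under eq_bigr => b _ do rewrite product_rule.
by rewrite !sum_ord2; ring.
Unshelve. all: by end_near.
Qed.

Lemma pd_metric i j : pd k (g i j) x = christoffel1 g k i j x + christoffel1 g k j i x.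
Proof. by rewrite /christoffel1 (pd_metric_sym j i); field. Qed.

Lemma christoffel_lower i j :
  \sum_(l < 2) christoffel g l k i x * g l j x = christoffel1 g k i j x.
Proof.
under eq_bigr => l _ do rewrite christoffelE.
have Gi_G m := ginv_metric g_metric m j Ux.
(* Abstracting the symbols keeps [ring] from unfolding their definitions. *)
move: (christoffel1 g k i) => C.
transitivity (\sum_(m < 2) (\sum_(l < 2) ginv g m l x * g l j x) * C m x).
  by rewrite !sum_ord2 (ginv_sym g_metric ord_max ord0 Ux); ring.
under eq_bigr => m _ do rewrite Gi_G.
by rewrite sum_ord2; case: (ord2P j) => -> /=; ring.
Qed.

Lemma nabla2_metric i j : nabla2 g g k i j x = 0.
Proof.
rewrite /nabla2 christoffel_lower.
under [X in _ - X]eq_bigr => l _ do rewrite (metric_sym g_metric i l Ux).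
by rewrite christoffel_lower pd_metric; ring.
Qed.

Lemma is_derive_ginv i j : is_derive x (ecoord R k) (ginv g i j)
  (- \sum_(a < 2) christoffel g i k a x * ginv g a j x
   - \sum_(a < 2) christoffel g j k a x * ginv g i a x).
Proof.
apply: is_derive_eq; first exact/derivableP/derivable_ginv.
rewrite -[LHS]/(pd k (ginv g i j) x) pd_ginv !sum_ord2 !christoffelE !sum_ord2 !pd_metric.
rewrite (ginv_sym g_metric j ord0 Ux) (ginv_sym g_metric j ord_max Ux).
by move: (christoffel1 g k) => C; ring.
Qed.

End MetricDerivative.

Section TensorDerivative.
Variables (R : realType) (U : set 'rV[R]_2) (g : tensor2 R) (x : 'rV[R]_2).
Hypotheses (U_open : open U) (g_metric : riemannian_metric_on U g) (Ux : U x).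
Variable k : 'I_2.

Let Gi_sym i j : ginv g i j x = ginv g j i x := ginv_sym g_metric i j Ux.

Lemma pd_norm2sq (T : tensor2 R) :
  (forall i j, derivable (T i j) x (ecoord R k)) ->
  pd k (norm2sq g T) x = 2 * \sum_(i < 2) \sum_(j < 2) \sum_(a < 2) \sum_(b < 2)
    ginv g i a x * ginv g j b x * T i j x * nabla2 g T k a b x.
Proof.
move=> T_derivable.
apply: etrans (norm_leibniz (fun l a => christoffel g l k a x) Gi_sym
                 (fun i j => T i j x) (fun i j => pd k (T i j) x)).
apply: is_derive_pd; rewrite /norm2sq.
do 4 apply: is_derive_sumf => ?.
do 2 (apply: is_derive_mul; last exact/derivableP/T_derivable).
by apply: is_derive_mul; exact: (is_derive_ginv U_open g_metric Ux).
Qed.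

End TensorDerivative.

Section Traceless.
Variables (R : realType) (U : set 'rV[R]_2) (g h : tensor2 R) (x : 'rV[R]_2).
Hypotheses (U_open : open U) (g_metric : riemannian_metric_on U g) (Ux : U x).
Hypotheses (h_smooth : forall i j, smooth_on U (h i j))
           (h_sym : forall i j y, U y -> h i j y = h j i y).
Variable k : 'I_2.

Let is_derive_h i j := smooth_is_derive Ux k (h_smooth i j).

Lemma is_derive_meanH : is_derive x (ecoord R k) (meanH g h)
  (\sum_(i < 2) \sum_(j < 2) ginv g i j x * nabla2 g h k i j x).
Proof.
apply: is_derive_eq; last first.
  exact: (trace_leibniz (fun i j => ginv g i j x) (fun l a => christoffel g l k a x)
            (fun i j => h i j x) (fun i j => pd k (h i j) x)).
rewrite /meanH; do 2 apply: is_derive_sumf => ?.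
by apply: is_derive_mul; [exact: (is_derive_ginv U_open g_metric Ux) | exact: is_derive_h].
Qed.

Lemma is_derive_traceless i j : is_derive x (ecoord R k) (traceless g h i j)
  (pd k (h i j) x - pd k (meanH g h) x / 2 * g i j x - meanH g h x / 2 * pd k (g i j) x).
Proof.
have [meanH_derivable _] := is_derive_meanH.
apply: is_derive_eq.
  apply: is_derive_sub; first exact: is_derive_h.
  apply: is_derive_mul; last exact: (is_derive_metric g_metric).
  exact: is_derive_mul (derivableP meanH_derivable) (is_derive_cst (2^-1 : R) _ _).
by rewrite mulr0 add0r /cst -/(pd k (meanH g h) x); ring.
Qed.

Lemma nabla2_traceless i j :
  nabla2 g (traceless g h) k i j x = nabla2 g h k i j x - pd k (meanH g h) x / 2 * g i j x.
Proof.
transitivity (nabla2 g h k i j x - pd k (meanH g h) x / 2 * g i j x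
              - meanH g h x / 2 * nabla2 g g k i j x).
  rewrite /nabla2 (is_derive_pd (is_derive_traceless i j)) /traceless !sum_ord2.
  by move: (christoffel g) (meanH g h x) => Gamma H; ring.
by rewrite (nabla2_metric U_open g_metric Ux) mulr0 subr0.
Qed.

Lemma traceless_orthogonal :
  \sum_(i < 2) \sum_(j < 2) \sum_(a < 2) \sum_(b < 2)
    ginv g i a x * ginv g j b x * traceless g h i j x * g a b x = 0.
Proof.
rewrite /traceless /meanH !sum_ord2.
have [D0 -> -> -> ->] := ginv_cramer g_metric Ux.
rewrite /metric_det (metric_sym g_metric ord_max ord0 Ux) (h_sym ord_max ord0 Ux) in D0 *.
by field.
Qed.

Lemma pd_norm2sq_traceless : pd k (norm2sq g (traceless g h)) x =
  2 * \sum_(i < 2) \sum_(j < 2) \sum_(a < 2) \sum_(b < 2)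
        ginv g i a x * ginv g j b x * traceless g h i j x * nabla2 g h k a b x.
Proof.
rewrite (pd_norm2sq U_open g_metric Ux); last by move=> i j; case: (is_derive_traceless i j).
transitivity (2 * \sum_(i < 2) \sum_(j < 2) \sum_(a < 2) \sum_(b < 2)
                    ginv g i a x * ginv g j b x * traceless g h i j x * nabla2 g h k a b x
              - pd k (meanH g h) x * \sum_(i < 2) \sum_(j < 2) \sum_(a < 2) \sum_(b < 2)
                    ginv g i a x * ginv g j b x * traceless g h i j x * g a b x).
  rewrite !sum_ord2 !nabla2_traceless.
  by move: (nabla2 g h k) (traceless g h) (pd k (meanH g h) x) => N T dH; field.
by rewrite traceless_orthogonal mulr0 subr0.
Qed.

Lemma nabla2_sym i j : nabla2 g h k i j x = nabla2 g h k j i x.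
Proof.
rewrite /nabla2 (pd_eq_on U_open Ux k (h_sym i j)) !sum_ord2.
rewrite (h_sym j ord0 Ux) (h_sym j ord_max Ux) (h_sym ord0 i Ux) (h_sym ord_max i Ux).
by move: (christoffel g) => Gamma; ring.
Qed.

End Traceless.

Theorem lemma4p2 (R : realType) (U : set 'rV[R]_2) (g h : tensor2 R) :
  open U ->
  riemannian_metric_on U g ->
  (forall i j, smooth_on U (h i j)) ->
  (forall i j x, U x -> h i j x = h j i x) ->
  (forall i j k x, U x -> nabla2 g h i j k x = nabla2 g h j i k x) ->
  forall x, U x ->
    2 * norm2sq g (traceless g h) x
      * (norm3sq g (nabla2 g h) x - gradinner g (meanH g h) (meanH g h) x)
    = gradinner g (norm2sq g (traceless g h)) (norm2sq g (traceless g h)) x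
      - 2 * contract_grad g (traceless g h) (norm2sq g (traceless g h)) (meanH g h) x.
Proof.
move=> U_open g_metric h_smooth h_sym codazzi x Ux.
have dH_trace a := is_derive_pd (is_derive_meanH U_open g_metric Ux h_smooth a).
have dN_inner a := pd_norm2sq_traceless U_open g_metric Ux h_smooth h_sym a.
have nabla_h_sym23 a i j := nabla2_sym g U_open Ux h_sym a i j.
apply: (traceless_symmetric_identity (fun i j => metric_sym g_metric i j Ux)
  (fun i j => h_sym i j x Ux) (fun i j => ginv_metric g_metric i j Ux)
  (fun a i j => codazzi a i j x Ux) nabla_h_sym23 dH_trace dN_inner).
Qed.
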